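(* Let $k\ge1$ and $1\le r\le(2k+1)^2$. Let $\overline{\mathcal{B}}(2k+1,2k+1;r)$ be the subset of $\mathcal{B}(2k+1,2k+1;r)$ consisting of all boards whose board partition $\begin{pmatrix}\lambda_1&\lambda_2&\lambda_3&\lambda_4\\ \delta_1&\delta_2&\delta_3&\delta_4\end{pmatrix}_c$ satisfies: (i) $\lambda_1\ge\lambda_i$ for all $i>1$; (ii) $\lambda_2\ge\lambda_4$; (iii) if $\lambda_1=\lambda_2$ then $\lambda_3\ge\lambda_4$; (iv) if $\lambda_1=\lambda_3$ and $\lambda_2\ne\lambda_4$, then $\delta_1\ge\delta_2$, and if moreover $\delta_1=\delta_2$ then $\delta_3\ge\delta_4$; (v) if $\lambda_2=\lambda_4$ and $\lambda_1\ne\lambda_3$, then $\delta_1\ge\delta_4$, and if moreover $\delta_1=\delta_4$ then $\delta_2\ge\delta_3$; (vi) if $\lambda_1=\lambda_2>\lambda_3=\lambda_4$ then $\delta_2\ge\delta_4$; (vii) if $\lambda_1=\lambda_3>\lambda_2=\lambda_4$ then $\delta_1\ge\delta_i$ for all $i$, and: if $\delta_1=\delta_2$ then $\delta_3\ge\delta_4$; if $\delta_1=\delta_3$ then $\delta_2\ge\delta_4$; if $\delta_1=\delta_4$ then $\delta_2\ge\delta_3$; (viii) if $\lambda_1=\lambda_2=\lambda_3=\lambda_4$ then $\delta_1\ge\delta_i$ for all $i$, $\delta_2\ge\delta_4$, and if $\delta_1=\delta_2$ then $\delta_3\ge\delta_4$. Then: (1) $\overline{\mathcal{B}}(2k+1,2k+1;r)$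 is a disjoint union of sets each consisting of all boards in $\mathcal{B}(2k+1,2k+1;r)$ with some fixed board partition; (2) every board of $\mathcal{B}(2k+1,2k+1;r)$ is equivalent under $D_4$ to some board of $\overline{\mathcal{B}}(2k+1,2k+1;r)$; (3) if two boards of $\overline{\mathcal{B}}(2k+1,2k+1;r)$ are equivalent under $D_4$, they have the same board partition.
   Context: A $(2k+1)\times(2k+1)$ grid has cells $(i,j)$ with rows numbered top to bottom and columns left to right. $\mathcal{B}(2k+1,2k+1;r)$ is the set of boards, i.e. subsets of exactly $r$ blocked cells; the dihedral group $D_4$ of the 8 symmetries of the square (four rotations about the center, reflections across the horizontal midline, vertical midline, and the two diagonals) acts on boards, and two boards are equivalent if some element maps one to the other. The grid is divided into nine regions: $\Lambda_1$ = rows $1..k$, cols $1..k$; $\Lambda_2$ = rows $1..k$, cols $k+2..2k+1$; $\Lambda_3$ = rows $k+2..2k+1$, cols $k+2..2k+1$; $\Lambda_4$ = rows $k+2..2k+1$, cols $1..k$; $\Delta_1$ = rows $1..k$, col $k+1$ (top strip); $\Delta_2$ = row $k+1$, cols $k+2..2k+1$ (right strip); $\Delta_3$ = rows $k+2..2k+1$, col $k+1$ (bottom strip); $\Delta_4$ = row $k+1$, cols $1..k$ (left strip); and the center cell $(k+1,k+1)$. The board partition $\begin{pmatrix}\lambda_1&\lambda_2&\lambda_3&\lambda_4\\ \delta_1&\delta_2&\delta_3&\delta_4\end{pmatrix}_c$ records the numbers $\lambda_i$, $\delta_i$ of blocked cells in $\Lambda_i$, $\Delta_i$, and $c\in\{0,1\}$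 the number of blocked cells at the center. *)

From mathcomp Require Import all_boot.
Set Implicit Arguments. Unset Strict Implicit. Unset Printing Implicit Defensive.

(* Cells of the (2k+1)x(2k+1) grid, 0-indexed: paper row i+1 = our row i. *)
Definition cell (k : nat) := ('I_(2 * k + 1) * 'I_(2 * k + 1))%type.
Definition board (k : nat) := {set cell k}.

Section Regions.
Variable k : nat.
Implicit Types (x : cell k) (B : board k).

Definition inLam1 x := (x.1 < k) && (x.2 < k).
Definition inLam2 x := (x.1 < k) && (k < x.2).
Definition inLam3 x := (k < x.1) && (k < x.2).
Definition inLam4 x := (k < x.1) && (x.2 < k).
Definition inDel1 x := (x.1 < k) && (x.2 == k :> nat).
Definition inDel2 x := (x.1 == k :> nat) && (k < x.2).
Definition inDel3 x := (k < x.1) && (x.2 == k :> nat).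
Definition inDel4 x := (x.1 == k :> nat) && (x.2 < k).
Definition inCenter x := (x.1 == k :> nat) && (x.2 == k :> nat).

Definition cnt (p : pred (cell k)) B := #|[set x in B | p x]|.

Definition bpart B : (nat * nat * nat * nat) * (nat * nat * nat * nat) * nat :=
  ((cnt inLam1 B, cnt inLam2 B, cnt inLam3 B, cnt inLam4 B),
   (cnt inDel1 B, cnt inDel2 B, cnt inDel3 B, cnt inDel4 B),
   cnt inCenter B).

Definition d4 : seq (cell k -> cell k) :=
  [:: (fun x => x);
      (fun x => (x.2, rev_ord x.1));
      (fun x => (rev_ord x.1, rev_ord x.2));
      (fun x => (rev_ord x.2, x.1));
      (fun x => (rev_ord x.1, x.2));
      (fun x => (x.1, rev_ord x.2));
      (fun x => (x.2, x.1));
      (fun x => (rev_ord x.2, rev_ord x.1))].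

Definition equivB B B' :=
  exists2 i : nat, (i < size d4) & (nth (fun x => x) d4 i) @: B = B'.

Definition bar_conds (p : (nat * nat * nat * nat) * (nat * nat * nat * nat) * nat) : Prop :=
  let: ((l1, l2, l3, l4), (d1, d2, d3, d4), c) := p in
  [/\ (l1 >= l2 /\ l1 >= l3 /\ l1 >= l4),
      l2 >= l4,
      (l1 = l2 -> l3 >= l4),
      (l1 = l3 -> l2 <> l4 -> d1 >= d2 /\ (d1 = d2 -> d3 >= d4)) &
      (l2 = l4 -> l1 <> l3 -> d1 >= d4 /\ (d1 = d4 -> d2 >= d3))] /\
  [/\ (l1 = l2 -> l2 > l3 -> l3 = l4 -> d2 >= d4),
      (l1 = l3 -> l3 > l2 -> l2 = l4 ->
         (d1 >= d2 /\ d1 >= d3 /\ d1 >= d4) /\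
         [/\ (d1 = d2 -> d3 >= d4), (d1 = d3 -> d2 >= d4) & (d1 = d4 -> d2 >= d3)]) &
      (l1 = l2 -> l2 = l3 -> l3 = l4 ->
         [/\ d1 >= d2, d1 >= d3, d1 >= d4, d2 >= d4 & (d1 = d2 -> d3 >= d4)])].

Definition inBbar (r : nat) B := #|B| = r /\ bar_conds (bpart B).

End Regions.

From mathcomp Require Import all_boot zify.
Set Implicit Arguments. Unset Strict Implicit. Unset Printing Implicit Defensive.

(* The symmetries of the square act on board partitions by permuting the
   lambdas and the deltas among themselves.  Conditions (i)-(viii) only
   compare lambdas with lambdas and deltas with deltas, so whether a partition
   satisfies them, and whether a symmetry fixes it, only depends on the
   relative order of (l1, l2, l3, l4) and of (d1, d2, d3, d4).  Replacing each
   entry by its rank in its quadruple therefore reduces the two facts "every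
   orbit meets the conditions" and "a symmetry carrying a partition satisfying
   them to another one fixes it" to the partitions with entries below 4, which
   are checked by computation. *)

Definition partition := ((nat * nat * nat * nat) * (nat * nat * nat * nat) * nat)%type.

Definition bar_condsb (p : partition) : bool :=
  let: ((l1, l2, l3, l4), (d1, d2, d3, d4), _) := p in
  [&& [&& l2 <= l1, l3 <= l1 & l4 <= l1], l4 <= l2,
      (l1 == l2) ==> (l4 <= l3),
      (l1 == l3) ==> (l2 != l4) ==> (d2 <= d1) && ((d1 == d2) ==> (d4 <= d3))
    & (l2 == l4) ==> (l1 != l3) ==> (d4 <= d1) && ((d1 == d4) ==> (d3 <= d2))] &&
  [&& (l1 == l2) ==> (l3 < l2) ==> (l3 == l4) ==> (d4 <= d2),
      (l1 == l3) ==> (l2 < l3) ==> (l2 == l4) ==>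
        [&& d2 <= d1, d3 <= d1, d4 <= d1, (d1 == d2) ==> (d4 <= d3),
            (d1 == d3) ==> (d4 <= d2) & (d1 == d4) ==> (d3 <= d2)]
    & (l1 == l2) ==> (l2 == l3) ==> (l3 == l4) ==>
        [&& d2 <= d1, d3 <= d1, d4 <= d1, d4 <= d2 & (d1 == d2) ==> (d4 <= d3)]].

Lemma bar_condsP (p : partition) : bar_conds p <-> bar_condsb p.
Proof.
have and3E (P Q R : Prop) : [/\ P, Q & R] <-> P /\ Q /\ R by split=> [[]|[? []]].
have and5E (P Q R S T : Prop) : [/\ P, Q, R, S & T] <-> P /\ Q /\ R /\ S /\ T.
  by split=> [[]|[? [? [? []]]]].
case: p => [[[[[l1 l2] l3] l4] [[[d1 d2] d3] d4]] c].
(* [lia] only understands binary conjunctions *)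
rewrite /bar_conds /bar_condsb; repeat setoid_rewrite and3E; setoid_rewrite and5E.
split=> [[[? [? [? [? ?]]]] [? [? ?]]] | /andP[/and5P[? ? ? ? ?] /and3P[? ? ?]]].
- by apply/andP; split; [apply/and5P; split | apply/and3P; split]; lia.
- by repeat split; lia.
Qed.

Definition rank (s : seq nat) (x : nat) : nat := count (fun m => m < x) s.
Arguments rank : simpl never.

Lemma leq_rank s x y : x <= y -> rank s x <= rank s y.
Proof. by move=> lexy; apply: sub_count => m /leq_trans; apply. Qed.

Lemma ltn_rank s x y : x \in s -> x < y -> rank s x < rank s y.
Proof.
move=> + ltxy; elim: s => //= z s IH; rewrite inE /rank /=.
case/orP=> [/eqP<- | /IH]; first by rewrite ltnn ltxy ltnS leq_rank // ltnW.
by case: (ltnP z x) => [/ltn_trans-> // | _]; rewrite /rank; lia.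
Qed.

Lemma rank_leq_mono s : {in s &, {mono rank s : x y / x <= y}}.
Proof.
move=> x y xs ys; apply/idP/idP; last exact: leq_rank.
by apply: contraTT; rewrite -!ltnNge; apply: ltn_rank.
Qed.

Lemma rank_eq_mono s : {in s &, {mono rank s : x y / x == y}}.
Proof. by move=> x y xs ys; rewrite !eqn_leq !rank_leq_mono. Qed.

Lemma rank_ltn_mono s : {in s &, {mono rank s : x y / x < y}}.
Proof. by move=> x y xs ys; rewrite !ltnNge rank_leq_mono. Qed.

Lemma rank_lt_size s x : x \in s -> rank s x < size s.
Proof.
rewrite /rank -(count_predC (fun m => m < x) s) -[X in X < _]addn0 ltn_add2l.
by rewrite -has_count => xs; apply/hasP; exists x => //=; rewrite ltnn.
Qed.

Definition part_sym (i : nat) (p : partition) : partition :=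
  let: ((l1, l2, l3, l4), (d1, d2, d3, d4), c) := p in
  match i with
  | 1 => ((l4, l1, l2, l3), (d4, d1, d2, d3), c)
  | 2 => ((l3, l4, l1, l2), (d3, d4, d1, d2), c)
  | 3 => ((l2, l3, l4, l1), (d2, d3, d4, d1), c)
  | 4 => ((l4, l3, l2, l1), (d3, d2, d1, d4), c)
  | 5 => ((l2, l1, l4, l3), (d1, d4, d3, d2), c)
  | 6 => ((l1, l4, l3, l2), (d4, d3, d2, d1), c)
  | 7 => ((l3, l2, l1, l4), (d2, d1, d4, d3), c)
  | _ => p
  end.

Definition part_rank (p : partition) : partition :=
  let: ((l1, l2, l3, l4), (d1, d2, d3, d4), _) := p in
  let rl := rank [:: l1; l2; l3; l4] in let rd := rank [:: d1; d2; d3; d4] in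
  ((rl l1, rl l2, rl l3, rl l4), (rd d1, rd d2, rd d3, rd d4), 0).

Lemma bar_condsb_sym_rank i p :
  bar_condsb (part_sym i (part_rank p)) = bar_condsb (part_sym i p).
Proof.
case: p => [[[[[l1 l2] l3] l4] [[[d1 d2] d3] d4]] c].
by case: i => [|[|[|[|[|[|[|[|i]]]]]]]];
  rewrite /= !rank_leq_mono ?rank_ltn_mono ?rank_eq_mono // !inE eqxx ?orbT.
Qed.

Lemma part_sym_rank_fixed i p :
  (part_sym i (part_rank p) == part_rank p) = (part_sym i p == p).
Proof.
case: p => [[[[[l1 l2] l3] l4] [[[d1 d2] d3] d4]] c].
case: i => [|[|[|[|[|[|[|[|i]]]]]]]]; rewrite /= ?eqxx //= !xpair_eqE ?eqxx ?andbT.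
all: by rewrite !rank_eq_mono // !inE eqxx ?orbT.
Qed.

Definition bar_transversal_at (p : partition) : bool :=
  has (fun i => bar_condsb (part_sym i p)) (iota 0 8) &&
  all (fun i => bar_condsb p ==> bar_condsb (part_sym i p) ==> (part_sym i p == p))
      (iota 0 8).

Lemma bar_transversal_at_rank p :
  bar_transversal_at (part_rank p) = bar_transversal_at p.
Proof.
have sym0 q : part_sym 0 q = q by case: q => [[[[[? ?] ?] ?] [[[? ?] ?] ?]] ?].
have bar_rank : bar_condsb (part_rank p) = bar_condsb p.
  by rewrite -[part_rank p]sym0 bar_condsb_sym_rank sym0.
rewrite /bar_transversal_at bar_rank; congr (_ && _); [apply: eq_has | apply: eq_all].
  by move=> i; rewrite /= bar_condsb_sym_rank.
by move=> i; rewrite /= bar_condsb_sym_rank part_sym_rank_fixed.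
Qed.

Definition quads (s : seq nat) : seq (nat * nat * nat * nat) :=
  [seq (abc, d) | abc <- [seq (ab, c) | ab <- [seq (a, b) | a <- s, b <- s], c <- s],
                  d <- s].

Lemma rank_quads a b c d (s := [:: a; b; c; d]) :
  (rank s a, rank s b, rank s c, rank s d) \in quads (iota 0 4).
Proof. by rewrite !allpairs_f // mem_iota rank_lt_size // !inE eqxx ?orbT. Qed.

Lemma bar_transversal_at_quads :
  all (fun l => all (fun d => bar_transversal_at (l, d, 0)) (quads (iota 0 4)))
      (quads (iota 0 4)).
Proof. by vm_compute. Qed.

Lemma bar_is_transversal p : bar_transversal_at p.
Proof.
rewrite -bar_transversal_at_rank.
case: p => [[[[[l1 l2] l3] l4] [[[d1 d2] d3] d4]] c].
move/allP: bar_transversal_at_quads => /(_ _ (rank_quads l1 l2 l3 l4))/allP.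
by apply; apply: rank_quads.
Qed.

Lemma exists_part_sym_bar p : exists2 i, i < 8 & bar_condsb (part_sym i p).
Proof.
have /andP[/hasP[i]] := bar_is_transversal p.
by rewrite mem_iota => /andP[_ lti] bar_i _; exists i.
Qed.

Lemma part_sym_bar_fixed p i :
  i < 8 -> bar_condsb p -> bar_condsb (part_sym i p) -> part_sym i p = p.
Proof.
move=> lti barp bari; have /andP[_ /allP/(_ i)] := bar_is_transversal p.
by rewrite mem_iota lti barp bari => /(_ isT)/eqP.
Qed.

Lemma cnt_imset k (f : cell k -> cell k) (P Q : pred (cell k)) (B : board k) :
  injective f -> (forall x, P (f x) = Q x) -> cnt P (f @: B) = cnt Q B.
Proof.
move=> finj PQ; rewrite /cnt -[RHS](card_imset _ finj).
apply: eq_card => y; rewrite !inE; apply/andP/imsetP=> [[/imsetP[x xB ->] Pfx] | [x]].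
  by exists x; rewrite // inE xB -PQ.
by rewrite inE -PQ => /andP[xB Pfx] ->; rewrite imset_f.
Qed.

Definition d4_act k i : cell k -> cell k := nth (fun x => x) (d4 k) i.

Lemma d4_act_inj k i : injective (@d4_act k i).
Proof.
(* every element of D4 has order dividing 4, so f^3 is an inverse of f *)
apply: (can_inj (g := fun x => d4_act i (d4_act i (d4_act i x)))).
by case: i => [|[|[|[|[|[|[|[|i]]]]]]]] [a b]; rewrite /d4_act /= ?rev_ordK //; case: i.
Qed.

Lemma bpart_d4_act k i (B : board k) :
  i < 8 -> bpart (d4_act i @: B) = part_sym i (bpart B).
Proof.
move: (@d4_act_inj k i); rewrite /bpart /d4_act.
case: i => [|[|[|[|[|[|[|[|i]]]]]]]] //= finj _;
  congr ((_, _, _, _), (_, _, _, _), _); apply: cnt_imset => // -[[a ha] [b hb]];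
  rewrite /inLam1 /inLam2 /inLam3 /inLam4 /inDel1 /inDel2 /inDel3 /inDel4 /inCenter /=; lia.
Qed.

Theorem theorem4p3 (k r : nat) (hk : 1 <= k) (hr1 : 1 <= r)
    (hr2 : r <= (2 * k + 1) ^ 2) :
  (* (1) Bbar is a (disjoint) union of full fibres of the board-partition map *)
  (exists P : ((nat * nat * nat * nat) * (nat * nat * nat * nat) * nat) -> Prop,
     forall B : board k, inBbar r B <-> (#|B| = r /\ P (bpart B)))
  (* (2) every board with r blocked cells is equivalent to one in Bbar *)
  /\ (forall B : board k, #|B| = r -> exists B', inBbar r B' /\ equivB B B')
  (* (3) equivalent boards of Bbar have the same board partition *)
  /\ (forall B B' : board k, inBbar r B -> inBbar r B' -> equivB B B' ->
        bpart B = bpart B').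
Proof.
split; first by exists bar_conds.
split.
- move=> B cardB; have [i lti bar_i] := exists_part_sym_bar (bpart B).
  exists (d4_act i @: B); split; last by exists i.
  by rewrite /inBbar card_imset ?bpart_d4_act ?bar_condsP //; apply: d4_act_inj.
- move=> B B' [_ barB] [_ barB'] [i lti defB'].
  rewrite -defB' bpart_d4_act // in barB' *.
  by symmetry; apply: part_sym_bar_fixed => //; apply/bar_condsP.
Qed.
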